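(* Let $\mathcal{L}$ be a countable collection of languages containing two distinct languages $L_i,L_j$ with $|L_i\cap L_j|=\infty$ and $|L_i\setminus L_j|<\infty$. Then for every $\varepsilon>0$, no online randomized identification algorithm that is $\varepsilon$-DP in the continual release model identifies $\mathcal{L}$ in the limit.
   Context: $\mathcal{X}$ is a countable universe; a language is an infinite subset of $\mathcal{X}$; $\mathcal{L}=\{L_1,L_2,\dots\}$ is a countable collection known to the algorithm. An enumeration of $K$ is an infinite sequence $x_1,x_2,\dots$ of elements of $K$ (repetitions allowed) in which every element of $K$ appears. An online randomized identification algorithm, after seeing $x_{1:n}$, outputs an index $i_n$ depending only on $x_{1:n}$ and internal randomness (no computability constraints). It identifies $\mathcal{L}$ in the limit if for every $K\in\mathcal{L}$ and every enumeration of $K$, with probability $1$ there exists $n^\star$ such that for all $n\ge n^\star$, $i_n=i_{n^\star}$ and $L_{i_n}=K$. Streams are neighboring if they differ at exactly one time step; the algorithm is $\varepsilon$-DP in the continual release model if for all neighboring input streams $x,x'$ and every measurable set $E$ of entire output sequences, $\Pr[(i_n)_n(x)\in E]\le e^\varepsilon\Pr[(i_n)_n(x')\in E]$. *)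

From HB Require Import structures.
From mathcomp Require Import all_boot all_order all_algebra.
From mathcomp Require Import all_classical all_reals all_analysis.
Set Implicit Arguments. Unset Strict Implicit. Unset Printing Implicit Defensive.
Import Order.TTheory GRing.Theory Num.Theory.
Local Open Scope classical_set_scope.
Local Open Scope ring_scope.

(* Streams are x : nat -> X, with x 0 = x_1, x 1 = x_2, ...
   The prefix x_{1:n} is the list [x 0; ...; x (n-1)]. *)
Definition prefix {X : Type} (x : nat -> X) (n : nat) : seq X := mkseq x n.

(* An online randomized algorithm: internal randomness omega in a probability
   space Omega; after seeing x_{1:n} (n >= 1) it outputs A x_{1:n} omega. *)
Definition output_seq {X Omega : Type} (A : seq X -> Omega -> nat)
  (x : nat -> X) (w : Omega) : nat -> nat :=
  fun n => A (prefix x n.+1) w.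

Definition cylinders : set (set (nat -> nat)) :=
  [set E | exists n k : nat, E = [set f : nat -> nat | f n = k]].

Definition outseq_measurable (E : set (nat -> nat)) : Prop :=
  <<s cylinders >> E.

Definition enumeration {X : Type} (K : set X) (x : nat -> X) : Prop :=
  (forall n, K (x n)) /\ (forall y, K y -> exists n, x n = y).

Definition neighboring {X : Type} (x x' : nat -> X) : Prop :=
  exists t, x t <> x' t /\ forall n, n <> t -> x n = x' n.

Definition continual_DP {X : Type} {R : realType} {d : measure_display}
  {Omega : measurableType d} (P : probability Omega R)
  (A : seq X -> Omega -> nat) (eps : R) : Prop :=
  forall (x x' : nat -> X), neighboring x x' ->
  forall E : set (nat -> nat), outseq_measurable E ->
    (P [set w | E (output_seq A x w)] <=
     (expR eps)%:E * P [set w | E (output_seq A x' w)])%E.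

Definition identifies_in_limit {X : Type} {R : realType} {d : measure_display}
  {Omega : measurableType d} (P : probability Omega R)
  (A : seq X -> Omega -> nat) (L : nat -> set X) : Prop :=
  forall k : nat, forall x : nat -> X, enumeration (L k) x ->
    P [set w | exists nstar : nat, forall n : nat, (nstar <= n)%N ->
         output_seq A x w n = output_seq A x w nstar /\
         L (output_seq A x w n) = L k] = 1%E.

From Pilot Require Import Defs.
From HB Require Import structures.
From mathcomp Require Import all_boot all_order all_algebra.
From mathcomp Require Import all_classical all_reals all_analysis.
From mathcomp Require Import lra zify.
Import Order.TTheory GRing.Theory Num.Theory.
Local Open Scope classical_set_scope.
Local Open Scope ring_scope.
Set Implicit Arguments. Unset Strict Implicit. Unset Printing Implicit Defensive.

Local Notation outcomes := (g_sigma_algebraType cylinders).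

(* If the learner identified L_i on an enumeration b of L_i, privacy would make it identify
   L_i, with probability one, on every stream that eventually agrees with b: a continual-DP
   mechanism cannot turn a null event into a non-null one by finitely many changes of its
   input.  So, from any finite prefix, one can append a block of b after which, with
   probability > 1/2, some output already names L_i.  Between consecutive blocks we slip in
   the next element of L_j.  The limit stream enumerates L_j, yet with probability
   > 1/2 it produces outputs naming L_i arbitrarily late, so it is not identified as L_j. *)

Lemma probability_bigcup_eventually_gt d (T : measurableType d) (R : realType)
    (P : probability T R) (F : nat -> set T) (r : R) :
  r < 1 -> (forall n, measurable (F n)) -> nondecreasing_seq F ->
  P (\bigcup_n F n) = 1%E -> exists N, forall m, (N <= m)%N -> (r%:E < P (F m))%E.
Proof.
move=> r1 mF ndF PF1.
have cvF := @nondecreasing_cvg_mu _ _ _ P F mF (bigcupT_measurable F mF) ndF.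
have [[N hN]|hN] := pselect (exists N, (r%:E < P (F N))%E).
  exists N => m Nm; apply: (lt_le_trans hN); apply: le_measure; rewrite ?inE //.
  exact/subsetPset/ndF.
have : (P (\bigcup_n F n) <= r%:E)%E.
  apply: (cvge_to_le cvF); apply: nearW => n /=.
  by rewrite leNgt; apply/negP => hn; apply: hN; exists n.
by rewrite PF1 lee_fin leNgt r1.
Qed.

Lemma probability_eq1_sub d (T : measurableType d) (R : realType)
    (P : probability T R) (E F : set T) :
  measurable E -> measurable F -> E `<=` F -> P E = 1%E -> P F = 1%E.
Proof.
move=> mE mF EF PE1; apply/eqP; rewrite eq_le probability_le1 //= -PE1.
by apply: le_measure; rewrite ?inE.
Qed.

Lemma exists_enum_pickle (X : countType) (S : set X) (a : X) : S a ->
  exists e : nat -> X, (forall n, S (e n)) /\ (forall y, S y -> e (pickle y) = y).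
Proof.
move=> Sa; exists (fun n => if unpickle n is Some y then (if pselect (S y) then y else a) else a).
split=> [n|y Sy]; last by rewrite pickleK; case: pselect.
by case: (unpickle n) => // y; case: pselect.
Qed.

(** * Measurable events on output sequences *)

Definition identifying {Y : Type} (L : nat -> set Y) (k : nat) : set (nat -> nat) :=
  [set f | exists nstar, forall n, (nstar <= n)%N -> f n = f nstar /\ L (f n) = L k].

Definition hits {Y : Type} (L : nat -> set Y) (i lo hi : nat) : set (nat -> nat) :=
  [set f | exists2 n, (lo <= n < hi)%N & L (f n) = L i].

Definition avoids_from {Y : Type} (L : nat -> set Y) (i m : nat) : set (nat -> nat) :=
  [set f | forall n, (m <= n)%N -> L (f n) <> L i].

Lemma measurable_coord n (Q : set nat) : measurable ([set f | Q (f n)] : set outcomes).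
Proof.
have -> : [set f | Q (f n)] = \bigcup_(k in Q) ([set f | f n = k] : set outcomes).
  apply/seteqP; split => [f Qf|f [k Qk]] /=; [by exists (f n)|by move=> ->].
by apply: bigcup_measurable => k _; apply: sub_sigma_algebra; exists n, k.
Qed.

Lemma measurable_coord_eq n m : measurable ([set f | f n = f m] : set outcomes).
Proof.
have -> : [set f | f n = f m] =
    \bigcup_k ([set f | f n = k] `&` [set f | f m = k] : set outcomes).
  apply/seteqP; split => [f e|f [k _ []]] /=; [by exists (f n) => //=; split|by move=> -> ->].
by apply: bigcupT_measurable => k; apply: measurableI; exact: (measurable_coord _ [set k]).
Qed.

Lemma measurable_identifying {Y : Type} (L : nat -> set Y) k :
  measurable (identifying L k : set outcomes).
Proof.
have -> : identifying L k = \bigcup_ns \bigcap_(n in [set n | ns <= n]%N)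
    ([set f | f n = f ns] `&` [set f | L (f n) = L k] : set outcomes).
  by apply/seteqP; split => f [ns]; [move=> h|move=> _ h]; exists ns => // n /h.
apply: bigcupT_measurable => ns; apply: bigcap_measurableType => n _.
by apply: measurableI; [exact: measurable_coord_eq|exact: (measurable_coord n [set l | L l = L k])].
Qed.

Lemma measurable_hits {Y : Type} (L : nat -> set Y) i lo hi :
  measurable (hits L i lo hi : set outcomes).
Proof.
have -> : hits L i lo hi =
    \bigcup_(n in [set n | lo <= n < hi]%N) ([set f | L (f n) = L i] : set outcomes).
  by apply/seteqP; split => f [n hn h]; exists n.
by apply: bigcup_measurable => n _; exact: (measurable_coord n [set l | L l = L i]).
Qed.

Lemma measurable_avoids_from {Y : Type} (L : nat -> set Y) i m :
  measurable (avoids_from L i m : set outcomes).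
Proof.
have -> : avoids_from L i m =
    \bigcap_(n in [set n | m <= n]%N) ([set f | L (f n) <> L i] : set outcomes).
  by apply/seteqP; split => f h n hn; exact: h.
by apply: bigcap_measurableType => n _; exact: (measurable_coord n [set l | L l <> L i]).
Qed.

Section algorithm.
Context (X : Type) (R : realType) (d : measure_display) (Omega : measurableType d)
  (P : probability Omega R) (A : seq X -> Omega -> nat).
Hypothesis measurable_A : forall s, measurable_fun setT (A s).

Lemma measurable_output_seq x : measurable_fun setT (output_seq A x : Omega -> outcomes).
Proof.
apply: (@measurability _ _ _ outcomes _ _ cylinders) => //.
move=> _ [_ [n [k ->]] <-]; rewrite setTI.
have -> : output_seq A x @^-1` [set f | f n = k] = A (mkseq x n.+1) @^-1` [set k].
  by apply/seteqP; split => w.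
by rewrite -[X in measurable X]setTI; exact: measurable_A.
Qed.

Lemma measurable_output_event x (E : set outcomes) :
  measurable E -> measurable [set w | E (output_seq A x w)].
Proof. by move=> mE; have := measurable_output_seq x measurableT mE; rewrite setTI. Qed.

Lemma output_seq_prefix x y n : (forall p, (p <= n)%N -> x p = y p) ->
  forall w, output_seq A x w n = output_seq A y w n.
Proof.
move=> xy w; rewrite /output_seq /Defs.prefix /mkseq; congr (A _ w).
by apply/eq_in_map => p; rewrite mem_iota add0n ltnS => /xy.
Qed.

Variable eps : R.
Hypothesis DP : continual_DP P A eps.

(* Each single change multiplies probabilities by at most [expR eps], so it preserves null events. *)
Lemma continual_DP_null_finite_change (E : set (nat -> nat)) (s : seq nat) x x' :
  outseq_measurable E -> (forall n, n \notin s -> x n = x' n) ->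
  P [set w | E (output_seq A x' w)] = 0%E -> P [set w | E (output_seq A x w)] = 0%E.
Proof.
move=> mE; elim: s x => [|t s IH] x xx' Px'0.
  by have -> : x = x' by apply/funext => n; exact: xx'.
pose y n := if n == t then x' n else x n.
have Py0 : P [set w | E (output_seq A y w)] = 0%E.
  apply: IH Px'0 => n ns; rewrite /y; case: eqP => // /eqP nt; apply: xx'.
  by rewrite in_cons negb_or nt.
have [xt|xt] := pselect (x t = x' t).
  by have -> : x = y by apply/funext => n; rewrite /y; case: eqP => // ->.
have xy : neighboring x y.
  by exists t; split => [|n /eqP/negbTE nt]; rewrite /y ?eqxx ?nt.
apply/eqP; rewrite eq_le measure_ge0 andbT.
by have := DP xy mE; rewrite Py0 mule0.
Qed.

Lemma continual_DP_almost_surely_eventually (E : set outcomes) x x' K :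
  measurable E -> (forall n, (K <= n)%N -> x n = x' n) ->
  P [set w | E (output_seq A x' w)] = 1%E -> P [set w | E (output_seq A x w)] = 1%E.
Proof.
move=> mE xx' Px'1.
have mCE : outseq_measurable (~` E) := measurableC mE.
have mEx y := measurable_output_event y mE.
have Px0 : P (~` [set w | E (output_seq A x w)]) = 0%E.
  apply: (@continual_DP_null_finite_change (~` E) (iota 0 K) x x' mCE).
    by move=> n; rewrite mem_iota add0n -leqNgt => /xx'.
  by rewrite -[X in P X = _]/(~` [set w | E (output_seq A x' w)]) probability_setC
    // Px'1 subee.
by rewrite -[X in P X]setCK probability_setC ?Px0 ?sube0 //; exact: measurableC.
Qed.

Variables (L : nat -> set X) (i : nat).

Lemma identifying_hits_eventually x lo :
  P [set w | identifying L i (output_seq A x w)] = 1%E ->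
  exists N0, forall N, (N0 <= N)%N ->
    ((2^-1)%:E < P [set w | hits L i lo N (output_seq A x w)])%E.
Proof.
move=> Px1.
pose W N := [set w | hits L i lo N (output_seq A x w)].
have mW N : measurable (W N) := measurable_output_event x (measurable_hits L i lo N).
apply: (probability_bigcup_eventually_gt _ mW); first lra.
  move=> N N' NN'; apply/subsetPset => w [n /andP[lon nN] hn]; exists n => //.
  by rewrite lon (leq_trans nN NN').
apply: probability_eq1_sub Px1.
- exact: measurable_output_event (measurable_identifying _ _).
- exact: bigcupT_measurable.
move=> w [ns hns]; set n := maxn ns lo.
by exists n.+1 => //; exists n; [rewrite leq_maxr /=|case: (hns n (leq_maxl _ _))].
Qed.

(* Late windows of probability > 1/2 clash with the event, also of probability > 1/2 for
   late [m], that the outputs avoid [L i] from [m] on. *)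
Lemma hits_windows_not_identifying x j (lo hi : nat -> nat) :
  L j <> L i -> (forall k, (k <= lo k)%N) ->
  (forall k, (2^-1)%:E < P [set w | hits L i (lo k) (hi k) (output_seq A x w)])%E ->
  P [set w | identifying L j (output_seq A x w)] <> 1%E.
Proof.
move=> Lji klo Phits Px1.
pose Z m := [set w | avoids_from L i m (output_seq A x w)].
have mZ m : measurable (Z m) := measurable_output_event x (measurable_avoids_from L i m).
have [m0 Zm0] : exists N, forall m, (N <= m)%N -> ((2^-1)%:E < P (Z m))%E.
  apply: (probability_bigcup_eventually_gt _ mZ); first lra.
    by move=> m m' mm'; apply/subsetPset => w hw n /(leq_trans mm')/hw.
  apply: probability_eq1_sub Px1.
  - exact: measurable_output_event (measurable_identifying _ _).
  - exact: bigcupT_measurable.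
  - by move=> w [ns hns]; exists ns => // n /hns [_ ->].
pose H := [set w | hits L i (lo m0) (hi m0) (output_seq A x w)].
have mH : measurable H := measurable_output_event x (measurable_hits L i _ _).
have ZH0 : Z m0 `&` H = set0.
  apply/seteqP; split => // w [Zw [n /andP[lon _] hn]].
  exact: Zw n (leq_trans (klo m0) lon) hn.
have := probability_le1 P (measurableU _ _ (mZ m0) mH).
rewrite (measureU P (mZ m0) mH ZH0) leNgt => /negP; apply.
have -> : 1%E = ((2^-1 + 2^-1)%:E : \bar R) by congr (_%:E); lra.
by rewrite EFinD; apply: lteD; [exact: Zm0|exact: Phits].
Qed.

End algorithm.

(** * Streams built by interleaving and diagonalisation *)

Definition interleave {X : Type} (e g : nat -> X) : nat -> X :=
  fun n => if odd n then g n./2 else e n./2.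

Lemma interleave_double {X : Type} (e g : nat -> X) n : interleave e g n.*2 = e n.
Proof. by rewrite /interleave odd_double doubleK. Qed.

Lemma interleave_doubleS {X : Type} (e g : nat -> X) n : interleave e g n.*2.+1 = g n.
Proof. by rewrite /interleave /= odd_double uphalf_double. Qed.

Lemma enumeration_interleave {X : Type} (K : set X) (e g : nat -> X) :
  (forall n, K (e n)) -> (forall n, K (g n)) ->
  (forall y, K y -> (exists n, e n = y) \/ (exists n, g n = y)) ->
  enumeration K (interleave e g).
Proof.
move=> Ke Kg cover; split=> [n|y /cover [[n <-]|[n <-]]].
- by rewrite /interleave; case: odd.
- by exists n.*2; rewrite interleave_double.
- by exists n.*2.+1; rewrite interleave_doubleS.
Qed.

Lemma interleave_eq_prefix {X : Type} (e g g' : nat -> X) N :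
  (forall m, (m < N)%N -> g m = g' m) ->
  forall n, (n < N.*2)%N -> interleave e g n = interleave e g' n.
Proof. by move=> gg' n nN; rewrite /interleave; case: odd => //; rewrite gg' ?ltn_half_double. Qed.

Lemma interleave_eq_suffix {X : Type} (e g g' : nat -> X) N :
  (forall m, (N <= m)%N -> g m = g' m) ->
  forall n, (N.*2 <= n)%N -> interleave e g n = interleave e g' n.
Proof. by move=> gg' n Nn; rewrite /interleave; case: odd => //; rewrite gg' ?geq_half_double. Qed.

Section diagonal.
Context (X : Type) (a : X) (v : nat -> X) (next : (nat -> X) -> nat -> nat).
Hypothesis next_gt : forall g T, (T < next g T)%N.

Definition update (g : nat -> X) (N : nat) (y : X) : nat -> X :=
  fun m => if m == N then y else g m.

(* Invariant: stage [k] is [(g, T)] with [g m = a] for [m > T]; stage [k.+1] writes [v k]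
   at the slot [next g T]. *)
Fixpoint stage (k : nat) : (nat -> X) * nat :=
  if k is k'.+1 then
    let: (g, T) := stage k' in let N := next g T in (update g N (v k'), N)
  else (fun=> a, 0%N).

Local Notation fill k := (stage k).1.
Local Notation slot k := (stage k).2.

Definition diagonal (m : nat) : X := fill m m.

Lemma slotS k : slot k.+1 = next (fill k) (slot k).
Proof. by rewrite /=; case: (stage k). Qed.

Lemma fillS k : fill k.+1 = update (fill k) (slot k.+1) (v k).
Proof. by rewrite slotS /=; case: (stage k). Qed.

Lemma slot_ltS k : (slot k < slot k.+1)%N.
Proof. by rewrite slotS. Qed.

Lemma leq_slot k : (k <= slot k)%N.
Proof. by elim: k => // k IH; exact: leq_ltn_trans IH (slot_ltS k). Qed.

Lemma slot_leq k K : (k <= K)%N -> (slot k <= slot K)%N.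
Proof.
move=> /subnK <-; elim: (K - k)%N => // n IH.
by rewrite addSn (leq_trans IH) // ltnW // slot_ltS.
Qed.

Lemma fill_default k m : (slot k < m)%N -> fill k m = a.
Proof.
elim: k m => // k IH m km; rewrite fillS /update ifN_eq ?(gtn_eqF km) //.
exact/IH/(ltn_trans (slot_ltS k)).
Qed.

Lemma fill_stable k K m : (k <= K)%N -> (m <= slot k)%N -> fill K m = fill k m.
Proof.
move=> /subnK <- mk; elim: (K - k)%N => // n IH.
rewrite addSn fillS /update ifN_eq ?IH //.
rewrite neq_ltn; apply/orP; left; apply: leq_ltn_trans mk _.
exact: leq_ltn_trans (slot_leq (leq_addl n k)) (slot_ltS _).
Qed.

Lemma diagonal_fill k m : (m < slot k.+1)%N -> diagonal m = fill k m.
Proof.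
move=> mk; have -> : diagonal m = fill k.+1 m.
  have [km|/ltnW mk'] := leqP m k.+1.
    by rewrite (fill_stable km (leq_slot m)).
  by rewrite /diagonal (fill_stable mk' (ltnW mk)).
by rewrite fillS /update ltn_eqF.
Qed.

Lemma diagonal_slot k : diagonal (slot k.+1) = v k.
Proof.
by rewrite /diagonal (fill_stable (leq_slot k.+1) (leqnn _)) fillS /update eqxx.
Qed.

Lemma diagonal_in (K : set X) : K a -> (forall k, K (v k)) -> forall m, K (diagonal m).
Proof.
move=> Ka Kv m; rewrite /diagonal; elim: m {-1}m => [|k IH] n //.
by rewrite fillS /update; case: eqP.
Qed.

End diagonal.

Section diagonal_stream.
Context (X : Type) (R : realType) (d : measure_display) (Omega : measurableType d)
  (P : probability Omega R) (A : seq X -> Omega -> nat) (eps : R).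
Hypotheses (measurable_A : forall s, measurable_fun setT (A s))
  (DP : continual_DP P A eps).
Variables (L : nat -> set X) (i : nat) (e : nat -> X).

Definition good_window (g : nat -> X) (T N : nat) : Prop :=
  (T < N)%N /\
  ((2^-1)%:E < P [set w | hits L i T.*2 N.*2 (output_seq A (interleave e g) w)])%E.

Definition next_window (g : nat -> X) (T : nat) : nat :=
  if pselect (exists N, good_window g T N) then xget 0%N (good_window g T) else T.+1.

Lemma next_window_gt g T : (T < next_window g T)%N.
Proof. by rewrite /next_window; case: pselect => // ex; case: (xgetPex 0%N ex). Qed.

Variables (g0 : nat -> X) (a : X) (K0 : nat).
Hypothesis identifying_base :
  P [set w | identifying L i (output_seq A (interleave e g0) w)] = 1%E.
Hypothesis g0_default : forall m, (K0 <= m)%N -> g0 m = a.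

Lemma next_window_good g T :
  (forall m, (T < m)%N -> g m = a) -> good_window g T (next_window g T).
Proof.
move=> g_default; rewrite /next_window; case: pselect => [ex|[]]; first exact: xgetPex ex.
have Px1 : P [set w | identifying L i (output_seq A (interleave e g) w)] = 1%E.
  apply: (continual_DP_almost_surely_eventually measurable_A DP
    (measurable_identifying L i) _ identifying_base).
  apply: (@interleave_eq_suffix _ e g g0 (maxn K0 T.+1)) => m.
  by rewrite geq_max => /andP[/g0_default -> /g_default ->].
have [N0 hN0] := identifying_hits_eventually measurable_A T.*2 Px1.
by exists (maxn N0 T.+1); split; [exact: leq_maxr|apply: hN0; lia].
Qed.

Variable v : nat -> X.
Local Notation slot k := (stage a v next_window k).2.
Local Notation fill k := (stage a v next_window k).1.

Lemma diagonal_hits k :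
  ((2^-1)%:E < P [set w | hits L i (slot k).*2 (slot k.+1).*2
      (output_seq A (interleave e (diagonal a v next_window)) w)])%E.
Proof.
have [_] := next_window_good (@fill_default _ a v _ next_window_gt k).
have agree w n : (n < (slot k.+1).*2)%N ->
    output_seq A (interleave e (diagonal a v next_window)) w n =
    output_seq A (interleave e (fill k)) w n.
  move=> nk; apply: output_seq_prefix => p pn.
  apply: interleave_eq_prefix (leq_ltn_trans pn nk) => m.
  exact: (@diagonal_fill _ a v _ next_window_gt).
rewrite -slotS; congr (_ < P _)%E; apply/seteqP.
by split=> w [n /andP[n1 n2] hn]; exists n; rewrite ?n1 // ?agree // -agree.
Qed.

End diagonal_stream.

Theorem theorem1p4 (X : countType) (L : nat -> set X)
  (Linf : forall i, ~ finite_set (L i))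
  (Hij : exists i j : nat, L i <> L j /\
           ~ finite_set (L i `&` L j) /\ finite_set (L i `\` L j))
  (R : realType) (eps : R) (heps : 0 < eps) :
  forall (d : measure_display) (Omega : measurableType d)
         (P : probability Omega R) (A : seq X -> Omega -> nat),
    (forall s : seq X, measurable_fun setT (A s)) ->
    continual_DP P A eps ->
    ~ identifies_in_limit P A L.
Proof.
move=> d Omega P A measurable_A DP identifies.
have [i [j [Lij [Iinf Dfin]]]] := Hij.
have /set0P[a [Lia Lja]] : L i `&` L j != set0.
  by apply/eqP => I0; apply: Iinf; rewrite I0; exact: finite_set0.
have [e [eIJ e_pickle]] := exists_enum_pickle (S := L i `&` L j) (conj Lia Lja).
have [v [vJ v_pickle]] := exists_enum_pickle Lja.
have [s Ds] := (finite_seqP _).1 Dfin.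
have g0_in m : L i (nth a s m).
  have [ms|/(nth_default a) -> //] := ltnP m (size s).
  have : [set` s] (nth a s m) by exact: mem_nth.
  by rewrite -Ds => -[].
have base : enumeration (L i) (interleave e (nth a s)).
  apply: enumeration_interleave => [n|//|y Liy]; first by case: (eIJ n).
  have [Ljy|Ljy] := pselect (L j y); first by left; exists (pickle y); exact: e_pickle.
  have : [set` s] y by rewrite -Ds.
  by right; exists (index y s); rewrite nth_index.
pose next := next_window P A L i e.
have next_gt : forall g T, (T < next g T)%N := @next_window_gt _ _ _ _ P A L i e.
have diag : enumeration (L j) (interleave e (diagonal a v next)).
  apply: enumeration_interleave => [n|m|y Ljy]; first by case: (eIJ n).
    exact: diagonal_in.
  right; exists (stage a v next (pickle y).+1).2.
  by rewrite diagonal_slot ?v_pickle.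
have windows := diagonal_hits measurable_A DP (identifies i _ base) (@nth_default _ a s) v.
apply: (hits_windows_not_identifying measurable_A (nesym Lij) _ windows (identifies j _ diag)).
by move=> k; rewrite -addnn (leq_trans (leq_slot a v next_gt k)) ?leq_addr.
Qed.
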